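(* Let $X=\{x_1,\dots,x_m\}$ be a finite set, let $d$ be a distance measure between hesitant fuzzy sets on $X$ with maximal value $d_{\max}$, and let $f$ be a monotone decreasing function on $[0,d_{\max}]$ with $f(0)\neq f(d_{\max})$. Define $$s_0(A,B)=\frac{f(d(A,B))-f(d_{\max})}{f(0)-f(d_{\max})}.$$ Then $s_0$ is a similarity measure between hesitant fuzzy sets on $X$, i.e. for all HFSs $A,B,C$ on $X$: (P1) $0\le s_0(A,B)\le 1$; (P2) $s_0(A,B)=1\iff A=B$; (P3) $s_0(A,B)=s_0(B,A)$; (P4) if $A\sqsubseteq B\sqsubseteq C$ then $s_0(A,C)\le s_0(A,B)$ and $s_0(A,C)\le s_0(B,C)$.
   Context: A hesitant fuzzy set (HFS) $A$ on $X$ assigns to each $x\in X$ a hesitant fuzzy element $h_A(x)$, a finite nonempty set of values in $[0,1]$; $n(h_A(x))$ is its number of values. When comparing $A,B$ at $x$, $n_x=\max\{n(h_A(x)),n(h_B(x))\}$ and the shorter element is extended to length $n_x$ by repeatedly adding its minimum value; values are arranged in decreasing order and $h_A^{\sigma(j)}(x)$ is the $j$-th one. $h_A(x)\preceq h_B(x)$ means $h_A^{\sigma(j)}(x)\le h_B^{\sigma(j)}(x)$ for all $j\le n_x$; $h_A(x)=h_B(x)$ means equality for all $j$; $A\sqsubseteq B$ means $h_A(x)\preceq h_B(x)$ for all $x\in X$; $A=B$ means $h_A(x)=h_B(x)$ for all $x$. A distance measure is a function $d$ on pairs of HFSs on $X$ with maximal value $d_{\max}=\max\{d(A,B)\}$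 satisfying: (D1) $0\le d(A,B)\le d_{\max}$; (D2) $d(A,B)=0\iff A=B$; (D3) $d(A,B)=d(B,A)$; (D4) if $A\sqsubseteq B\sqsubseteq C$ then $d(A,B)\le d(A,C)$ and $d(B,C)\le d(A,C)$. *)

From mathcomp Require Import all_boot all_order all_algebra.
Set Implicit Arguments. Unset Strict Implicit. Unset Printing Implicit Defensive.
Import Order.TTheory GRing.Theory Num.Theory.
Local Open Scope ring_scope.

Section HFS.
Variables (R : realFieldType) (X : finType).

(* A hesitant fuzzy element: a finite nonempty set of values in [0,1],
   represented by a duplicate-free nonempty list. *)
Definition hfe_valid (h : seq R) : Prop :=
  [/\ (0 < size h)%N, uniq h & all (fun v => (0 <= v) && (v <= 1)) h].

Definition hfs := X -> seq R.
Definition hfs_valid (A : hfs) : Prop := forall x, hfe_valid (A x).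

Definition hsort (h : seq R) : seq R := sort (fun a b => b <= a) h.
Definition hmin (h : seq R) : R := last 0 (hsort h).
Definition hext (h : seq R) (n : nat) : seq R :=
  hsort h ++ nseq (n - size h) (hmin h).
(* h^{sigma(j)} after extension to length n (0-based index j) *)
Definition hval (h : seq R) (n j : nat) : R := nth 0 (hext h n) j.

Definition hle (h1 h2 : seq R) : Prop :=
  let n := maxn (size h1) (size h2) in
  forall j, (j < n)%N -> hval h1 n j <= hval h2 n j.
Definition heq (h1 h2 : seq R) : Prop :=
  let n := maxn (size h1) (size h2) in
  forall j, (j < n)%N -> hval h1 n j = hval h2 n j.

Definition hfs_sub (A B : hfs) : Prop := forall x, hle (A x) (B x).
Definition hfs_eq (A B : hfs) : Prop := forall x, heq (A x) (B x).

Definition is_distance (d : hfs -> hfs -> R) (dmax : R) : Prop :=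
  [/\ (exists A B, [/\ hfs_valid A, hfs_valid B & d A B = dmax]),
      (forall A B, hfs_valid A -> hfs_valid B -> 0 <= d A B <= dmax),
      (forall A B, hfs_valid A -> hfs_valid B -> (d A B = 0 <-> hfs_eq A B)),
      (forall A B, hfs_valid A -> hfs_valid B -> d A B = d B A) &
      (forall A B C, hfs_valid A -> hfs_valid B -> hfs_valid C ->
         hfs_sub A B -> hfs_sub B C -> d A B <= d A C /\ d B C <= d A C)].

Definition is_similarity (s : hfs -> hfs -> R) : Prop :=
  forall A B C, hfs_valid A -> hfs_valid B -> hfs_valid C ->
  [/\ 0 <= s A B <= 1,
      (s A B = 1 <-> hfs_eq A B),
      s A B = s B A &
      (hfs_sub A B -> hfs_sub B C -> s A C <= s A B /\ s A C <= s B C)].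

Definition s0 (f : R -> R) (d : hfs -> hfs -> R) (dmax : R) (A B : hfs) : R :=
  (f (d A B) - f dmax) / (f 0 - f dmax).

End HFS.

From mathcomp Require Import all_boot all_order all_algebra.
Import Order.TTheory GRing.Theory Num.Theory.
Local Open Scope ring_scope.

(* s0 is f composed with d, rescaled affinely so that f 0 goes to 1 and
   f dmax to 0.  Since f is strictly decreasing on [0, dmax], the rescaled
   map sends [0, dmax] into [0, 1], reverses the order of distances and takes
   the value 1 only at distance 0; each similarity axiom is the image of the
   corresponding distance axiom. *)

Section NormalizedDecreasing.
Variables (R : realFieldType) (f : R -> R) (dmax : R).
Hypothesis f_decr : forall {a b}, 0 <= a -> a < b -> b <= dmax -> f b < f a.
Hypothesis dmax_ge0 : 0 <= dmax.
Hypothesis f0_neq_fmax : f 0 != f dmax.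

Definition normalize (t : R) : R := (f t - f dmax) / (f 0 - f dmax).

Lemma f_nonincr a b : 0 <= a -> a <= b -> b <= dmax -> f b <= f a.
Proof.
move=> a0; rewrite le_eqVlt => /predU1P[-> //|ab] bm.
exact/ltW/f_decr.
Qed.

Lemma f_range_gt0 : 0 < f 0 - f dmax.
Proof.
have dmax_gt0 : 0 < dmax.
  by rewrite lt_def dmax_ge0 andbT; apply: contraNneq f0_neq_fmax => <-.
by rewrite subr_gt0 f_decr.
Qed.

Lemma normalize_ge0 t : 0 <= t <= dmax -> 0 <= normalize t.
Proof.
case/andP=> t0 tm.
by rewrite divr_ge0 ?subr_ge0 ?(ltW f_range_gt0) ?f_nonincr.
Qed.

Lemma normalize_le1 t : 0 <= t <= dmax -> normalize t <= 1.
Proof.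
case/andP=> t0 tm.
by rewrite ler_pdivrMr ?f_range_gt0 // mul1r lerB ?f_nonincr.
Qed.

Lemma normalize0 : normalize 0 = 1.
Proof. by rewrite /normalize divff // gt_eqF ?f_range_gt0. Qed.

Lemma normalize_eq1 t : 0 <= t <= dmax -> (normalize t = 1) <-> (t = 0).
Proof.
case/andP=> t0 tm; split=> [|->]; last exact: normalize0.
move/(congr1 (fun y => y * (f 0 - f dmax) + f dmax)).
rewrite /normalize divfK ?gt_eqF ?f_range_gt0 // mul1r !subrK => ft_f0.
case: (ltrgtP 0 t) t0 => // t_gt0 _.
by have := f_decr (lexx 0) t_gt0 tm; rewrite ft_f0 ltxx.
Qed.

Lemma normalize_nonincr s t :
  0 <= s -> s <= t -> t <= dmax -> normalize t <= normalize s.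
Proof.
move=> s0 st tm.
rewrite ler_pM2r ?invr_gt0 ?f_range_gt0 // lerB //.
exact: f_nonincr.
Qed.

End NormalizedDecreasing.

Theorem theorem5 (R : realFieldType) (X : finType)
  (d : hfs R X -> hfs R X -> R) (dmax : R) (f : R -> R) :
  is_distance d dmax ->
  (forall a b : R, 0 <= a -> a < b -> b <= dmax -> f b < f a) ->
  f 0 != f dmax ->
  is_similarity (s0 f d dmax).
Proof.
move=> [[A0 [B0 [vA0 vB0 dA0B0]]] d_range d_eq0 d_sym d_mono] f_decr f_neq.
have dmax_ge0 : 0 <= dmax.
  by have /andP[] := d_range _ _ vA0 vB0; rewrite dA0B0.
move=> A B C vA vB vC; rewrite /s0 -!/(@normalize R f dmax _).
have dAB := d_range _ _ vA vB.
split.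
- by rewrite normalize_ge0 ?normalize_le1.
- apply: iff_trans (d_eq0 _ _ vA vB); exact: normalize_eq1.
- by rewrite d_sym.
- move=> sAB sBC; have [le_AB_AC le_BC_AC] := d_mono _ _ _ vA vB vC sAB sBC.
  have /andP[dAB0 _] := dAB.
  have /andP[dBC0 _] := d_range _ _ vB vC.
  have /andP[_ dACm] := d_range _ _ vA vC.
  by split; apply: normalize_nonincr.
Qed.
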